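(* Let $k\ge0$ and let $(w_1,i_1),(w_2,i_2)$ be marked words over a finite alphabet $A$. Then $(w_1,i_1)\equiv_k(w_2,i_2)$ if and only if Player 2 has a winning strategy in the $k$-round game on $(w_1,i_1)$ and $(w_2,i_2)$.
   Context: A marked word is a pair $(w,i)$ with $w\in A^*$ and $1\le i\le|w|$; $w(j)$ is the $j$-th letter. $FO^2[<,\mathrm{Inv}]$ is two-variable first-order logic with $<$, unary predicates $a(x)$ and binary predicates $a(x,y)$ meaning that some position strictly between $x$ and $y$ carries $a$. $(w_1,i_1)\equiv_k(w_2,i_2)$ means these marked words satisfy exactly the same $FO^2[<,\mathrm{Inv}]$ formulas with one free variable (interpreted at the mark) of quantifier depth at most $k$. The $k$-round game: a single pebble on each word, initially on $i_1$ and $i_2$. In each round, if the pebbles are on $j_1,j_2$, Player 1 chooses one word, say $w_1$, and moves its pebble to a position $j_1'\ne j_1$; Player 2 must move the other pebble to a position $j_2'$ with (i) $j_1<j_1'$ iff $j_2<j_2'$, (ii) $w_1(j_1')=w_2(j_2')$, (iii) the set of letters occurring strictly between $j_1$ and $j_1'$ in $w_1$ equals the set of letters occurring strictly between $j_2$ and $j_2'$ in $w_2$ (symmetrically if Player 1 chooses $w_2$). Player 2 wins the $k$-round game if $w_1(i_1)=w_2(i_2)$ and she makes a legal response in each of the $k$ rounds; otherwise Player 1 wins. *)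

From mathcomp Require Import all_boot.
Set Implicit Arguments. Unset Strict Implicit. Unset Printing Implicit Defensive.

(* Words over a finite alphabet A are [seq A]; positions are 0-based:
   position j of w (0 <= j < size w) corresponds to position j+1 in the paper. *)

Definition letter (A : finType) (w : seq A) (j : nat) : option A :=
  nth None (map Some w) j.

Definition between (A : finType) (w : seq A) (a : A) (j j' : nat) : Prop :=
  exists m, minn j j' < m < maxn j j' /\ letter w m = Some a.

Inductive var := VX | VY.

Inductive form (A : finType) :=
  | FTrue
  | FLab (a : A) (v : var)
  | FLt (v v' : var)
  | FEq (v v' : var)
  | FBtw (a : A) (v v' : var)
  | FNot (phi : form A)
  | FAnd (phi psi : form A)
  | FEx (v : var) (phi : form A).
Arguments FTrue {A}.

Fixpoint qdepth (A : finType) (phi : form A) : nat :=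
  match phi with
  | FNot p => qdepth p
  | FAnd p q => maxn (qdepth p) (qdepth q)
  | FEx _ p => (qdepth p).+1
  | _ => 0
  end.

Definition var_eqb (u v : var) : bool :=
  match u, v with VX, VX | VY, VY => true | _, _ => false end.

Fixpoint free (A : finType) (v : var) (phi : form A) : bool :=
  match phi with
  | FTrue => false
  | FLab _ u => var_eqb u v
  | FLt u u' | FEq u u' | FBtw _ u u' => var_eqb u v || var_eqb u' v
  | FNot p => free v p
  | FAnd p q => free v p || free v q
  | FEx u p => ~~ var_eqb u v && free v p
  end.

Definition upd (env : var -> nat) (v : var) (j : nat) : var -> nat :=
  fun u => if var_eqb u v then j else env u.

Fixpoint sat (A : finType) (w : seq A) (env : var -> nat) (phi : form A) : Prop :=
  match phi with
  | FTrue => True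
  | FLab a v => letter w (env v) = Some a
  | FLt v v' => env v < env v'
  | FEq v v' => env v = env v'
  | FBtw a v v' => between w a (env v) (env v')
  | FNot p => ~ sat w env p
  | FAnd p q => sat w env p /\ sat w env q
  | FEx v p => exists j, j < size w /\ sat w (upd env v j) p
  end.

Definition fo2_equiv (A : finType) (k : nat) (w1 : seq A) (i1 : nat)
    (w2 : seq A) (i2 : nat) : Prop :=
  forall phi : form A, qdepth phi <= k -> free VY phi = false ->
    (sat w1 (fun _ => i1) phi <-> sat w2 (fun _ => i2) phi).

Definition legal (A : finType) (u : seq A) (j j' : nat) (v : seq A) (m m' : nat) : Prop :=
  [/\ m' < size v, m' <> m, (j < j') = (m < m'), letter u j' = letter v m'
    & forall a, between u a j j' <-> between v a m m'].

Fixpoint p2wins (A : finType) (k : nat) (w1 : seq A) (j1 : nat) (w2 : seq A) (j2 : nat)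
    : Prop :=
  letter w1 j1 = letter w2 j2 /\
  match k with
  | 0 => True
  | k'.+1 =>
      (forall j1', j1' < size w1 -> j1' <> j1 ->
         exists j2', legal w1 j1 j1' w2 j2 j2' /\ p2wins k' w1 j1' w2 j2') /\
      (forall j2', j2' < size w2 -> j2' <> j2 ->
         exists j1', legal w2 j2 j2' w1 j1 j1' /\ p2wins k' w1 j1' w2 j2')
  end.

From Stdlib Require Import Classical.
From mathcomp Require Import all_boot.

Set Implicit Arguments. Unset Strict Implicit. Unset Printing Implicit Defensive.

(* Soundness: by induction on formulas, for an assignment of both variables
   whose two pebble pairs are k-winning and have the same atomic type (order
   and letters in between); a quantifier over v is answered by moving the
   pebble of v while the pebble of the other variable stays put.
   Completeness: if some move j1 of Player 1 has no winning answer, then every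
   legal answer j2 is separated from j1 by a depth-k formula; conjoining these
   finitely many formulas, renaming x to y, adding the quantifier-free type of
   the move and quantifying y gives a depth-(k+1) formula that holds at i1 but
   not at i2. *)

Lemma var_eqbb v : var_eqb v v.
Proof. by case: v. Qed.

Lemma var_eqb_sym u v : var_eqb u v = var_eqb v u.
Proof. by case: u; case: v. Qed.

Definition swap_var v := match v with VX => VY | VY => VX end.

Fixpoint swap_form (A : finType) (phi : form A) : form A :=
  match phi with
  | FTrue => FTrue
  | FLab a v => FLab a (swap_var v)
  | FLt v v' => FLt A (swap_var v) (swap_var v')
  | FEq v v' => FEq A (swap_var v) (swap_var v')
  | FBtw a v v' => FBtw a (swap_var v) (swap_var v')
  | FNot p => FNot (swap_form p)
  | FAnd p q => FAnd (swap_form p) (swap_form q)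
  | FEx v p => FEx (swap_var v) (swap_form p)
  end.

Section Semantics.

Variables (A : finType) (w : seq A).

Lemma isSome_letter j : isSome (letter w j) = (j < size w).
Proof. by elim: w j => [|x s IH] [|j] //=; rewrite ltnS -IH. Qed.

Lemma letter_some j : j < size w -> exists a, letter w j = Some a.
Proof. by rewrite -isSome_letter; case: (letter w j) => // a _; exists a. Qed.

Lemma between_sym a j j' : between w a j j' <-> between w a j' j.
Proof. by rewrite /between minnC maxnC. Qed.

Lemma between_nn a j : ~ between w a j j.
Proof. by case=> m []; rewrite minnn maxnn => /andP[/ltn_trans h /h]; rewrite ltnn. Qed.

Lemma eq_sat (phi : form A) e1 e2 :
  (forall v, free v phi -> e1 v = e2 v) -> (sat w e1 phi <-> sat w e2 phi).
Proof.
elim: phi e1 e2 => [|a v|v v'|v v'|a v v'|p IH|p IHp q IHq|v p IH] e1 e2 /= he;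
  try (by rewrite ?he ?var_eqbb ?orbT).
- by have := IH e1 e2 he; tauto.
- have := IHp e1 e2 (fun u hu => he u (introT orP (or_introl hu))).
  have := IHq e1 e2 (fun u hu => he u (introT orP (or_intror hu))).
  tauto.
- have eq_upd j : sat w (upd e1 v j) p <-> sat w (upd e2 v j) p.
    apply: IH => u hu; rewrite /upd; case E: (var_eqb u v) => //.
    by apply: he; rewrite var_eqb_sym E hu.
  by split=> -[j [lt_j hj]]; exists j; split=> //; apply/eq_upd.
Qed.

Lemma sat_swap_form (phi : form A) e :
  sat w e (swap_form phi) <-> sat w (e \o swap_var) phi.
Proof.
elim: phi e => [|a v|v v'|v v'|a v v'|p IH|p IHp q IHq|v p IH] e /=; try tauto.
- by have := IH e; tauto.
- by have := IHp e; have := IHq e; tauto.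
- have eq_upd j : sat w (upd e (swap_var v) j) (swap_form p) <->
                  sat w (upd (e \o swap_var) v j) p.
    by apply: (iff_trans (IH _)); apply: eq_sat => -[] _; case: v.
  by split=> -[j [lt_j hj]]; exists j; split=> //; apply/eq_upd.
Qed.

Lemma sat_swap_form_upd (phi : form A) e j :
  free VY phi = false -> sat w (upd e VY j) (swap_form phi) <-> sat w (fun=> j) phi.
Proof.
move=> freeY; apply: (iff_trans (sat_swap_form _ _)).
by apply: eq_sat => -[] //=; rewrite freeY.
Qed.

End Semantics.

Lemma qdepth_swap_form (A : finType) (phi : form A) : qdepth (swap_form phi) = qdepth phi.
Proof. by elim: phi => //= [p -> q ->|v p ->]. Qed.

Section AtomicType.

Variables (A : finType) (w1 w2 : seq A).

Definition same_type x1 y1 x2 y2 :=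
  [/\ (x1 < y1) = (x2 < y2), (y1 < x1) = (y2 < x2)
    & forall a, between w1 a x1 y1 <-> between w2 a x2 y2].

Lemma same_type_nn j m : same_type j j m m.
Proof. by split; rewrite ?ltnn // => a; split=> /between_nn. Qed.

Lemma same_typeC x1 y1 x2 y2 : same_type x1 y1 x2 y2 -> same_type y1 x1 y2 x2.
Proof.
case=> lt_xy lt_yx hb; split=> // a.
by rewrite between_sym (between_sym w2); apply: hb.
Qed.

Lemma same_type_eq x1 y1 x2 y2 : same_type x1 y1 x2 y2 -> (x1 = y1 <-> x2 = y2).
Proof.
case=> lt_xy lt_yx _.
have E : (x1 == y1) = (x2 == y2).
  by rewrite !eqn_leq (leqNgt x1) (leqNgt y1) (leqNgt x2) (leqNgt y2) lt_xy lt_yx.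
by split=> /eqP; [rewrite E | rewrite -E] => /eqP.
Qed.

Lemma legal_same_type j j' m m' : legal w1 j j' w2 m m' -> j' <> j -> same_type j j' m m'.
Proof.
case=> _ /eqP ne_m lt_jm _ hb /eqP ne_j; split=> //.
by rewrite (ltn_neqAle j') (ltn_neqAle m') (leqNgt j') (leqNgt m') lt_jm ne_j ne_m.
Qed.

Lemma same_type_legal j j' m m' :
  same_type j j' m m' -> j' <> j -> j' < size w1 -> letter w1 j' = letter w2 m' ->
  legal w1 j j' w2 m m'.
Proof.
move=> st ne_j lt_j eq_l; have [lt_jm _ hb] := st; split=> //.
- by rewrite -isSome_letter -eq_l isSome_letter.
- by move=> eq_m; apply: ne_j; apply/esym/(same_type_eq st).
Qed.

End AtomicType.

Lemma same_type_sym (A : finType) (w1 w2 : seq A) x1 y1 x2 y2 :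
  same_type w1 w2 x1 y1 x2 y2 -> same_type w2 w1 x2 y2 x1 y1.
Proof. by case=> lt_xy lt_yx hb; split=> // a; have := hb a; tauto. Qed.

Section Game.

Variable A : finType.
Implicit Types w : seq A.

Lemma p2wins_letter k w1 w2 j1 j2 : p2wins k w1 j1 w2 j2 -> letter w1 j1 = letter w2 j2.
Proof. by case: k => [|k] []. Qed.

Lemma p2wins_size k w1 w2 j1 j2 :
  p2wins k w1 j1 w2 j2 -> j1 < size w1 -> j2 < size w2.
Proof. by move/p2wins_letter; rewrite -!isSome_letter => ->. Qed.

Lemma p2wins_pred k w1 w2 j1 j2 : p2wins k.+1 w1 j1 w2 j2 -> p2wins k w1 j1 w2 j2.
Proof.
elim: k j1 j2 => [|k IH] j1 j2 [eq_l [forth back]] //; split=> //; split.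
- by move=> j1' lt ne; have [j2' [hl /IH hp]] := forth j1' lt ne; exists j2'.
- by move=> j2' lt ne; have [j1' [hl /IH hp]] := back j2' lt ne; exists j1'.
Qed.

Lemma p2wins_sym k w1 w2 j1 j2 : p2wins k w1 j1 w2 j2 -> p2wins k w2 j2 w1 j1.
Proof.
elim: k w1 w2 j1 j2 => [|k IH] w1 w2 j1 j2 [eq_l play] //; split=> //.
case: play => forth back; split.
- by move=> j2' lt ne; have [j1' [hl /IH hp]] := back j2' lt ne; exists j1'.
- by move=> j1' lt ne; have [j2' [hl /IH hp]] := forth j1' lt ne; exists j2'.
Qed.

Lemma p2wins_forth k w1 w2 a1 a2 j1 :
  p2wins k.+1 w1 a1 w2 a2 -> j1 < size w1 ->
  exists j2, p2wins k w1 j1 w2 j2 /\ same_type w1 w2 a1 j1 a2 j2.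
Proof.
move=> win lt_j1; have [-> | /eqP ne] := eqVneq j1 a1.
  by exists a2; split; [apply: p2wins_pred | apply: same_type_nn].
case: win => _ [forth _]; have [j2 [hl hp]] := forth j1 lt_j1 ne.
by exists j2; split=> //; apply: legal_same_type.
Qed.

Lemma p2wins_back k w1 w2 a1 a2 j2 :
  p2wins k.+1 w1 a1 w2 a2 -> j2 < size w2 ->
  exists j1, p2wins k w1 j1 w2 j2 /\ same_type w1 w2 a1 j1 a2 j2.
Proof.
move=> /p2wins_sym win /(p2wins_forth win) [j1 [hp st]].
by exists j1; split; [apply: p2wins_sym | apply: same_type_sym].
Qed.

Definition pebbles_ok k w1 e1 w2 e2 :=
  (forall v, p2wins k w1 (e1 v) w2 (e2 v)) /\
  same_type w1 w2 (e1 VX) (e1 VY) (e2 VX) (e2 VY).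

Lemma pebbles_ok_upd k w1 w2 e1 e2 v j1 j2 :
  pebbles_ok k.+1 w1 e1 w2 e2 -> p2wins k w1 j1 w2 j2 ->
  same_type w1 w2 (e1 (swap_var v)) j1 (e2 (swap_var v)) j2 ->
  pebbles_ok k w1 (upd e1 v j1) w2 (upd e2 v j2).
Proof.
move=> [win _] hp st; split; last by case: v st => /=; rewrite /upd //= => /same_typeC.
by case: v st => _ [] /=; rewrite /upd //=; apply: p2wins_pred.
Qed.

Lemma pebbles_ok_sat (phi : form A) k w1 w2 e1 e2 :
  qdepth phi <= k -> pebbles_ok k w1 e1 w2 e2 -> (sat w1 e1 phi <-> sat w2 e2 phi).
Proof.
elim: phi k e1 e2 => [|a v|v v'|v v'|a v v'|p IH|p IHp q IHq|v p IH] k e1 e2 /= dp ok;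
  have [win st] := ok.
- by [].
- by rewrite (p2wins_letter (win v)).
- by case: st => lt_xy lt_yx _; case: v; case: v' => /=; rewrite ?ltnn ?lt_xy ?lt_yx.
- have E := same_type_eq st; have E' := same_type_eq (same_typeC st).
  by case: v; case: v' => /=.
- case: st => _ _ hb; case: v; case: v' => /=; try exact: hb;
    try by split=> /between_nn.
  by move: (hb a); rewrite between_sym (between_sym w2).
- by have := IH k e1 e2 dp ok; tauto.
- move: dp; rewrite geq_max => /andP[dp dq].
  by have := IHp k e1 e2 dp ok; have := IHq k e1 e2 dq ok; tauto.
- case: k dp ok win => // k; rewrite ltnS => dp ok win; split.
  + case=> j1 [lt_j1 h1]; have [j2 [hp st']] := p2wins_forth (win (swap_var v)) lt_j1.
    exists j2; split; first exact: p2wins_size hp lt_j1.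
    by apply/(IH k _ _ dp (pebbles_ok_upd ok hp st')).
  + case=> j2 [lt_j2 h2]; have [j1 [hp st']] := p2wins_back (win (swap_var v)) lt_j2.
    exists j1; split; first exact: p2wins_size (p2wins_sym hp) lt_j2.
    by apply/(IH k _ _ dp (pebbles_ok_upd ok hp st')).
Qed.

Lemma p2wins_fo2_equiv k w1 w2 i1 i2 : p2wins k w1 i1 w2 i2 -> fo2_equiv k w1 i1 w2 i2.
Proof.
move=> win phi dp _; apply: (pebbles_ok_sat dp).
by split=> [//|]; apply: same_type_nn.
Qed.

End Game.

Section Completeness.

Variable A : finType.
Implicit Types w : seq A.

Lemma fo2_equiv_sym k w1 w2 i1 i2 : fo2_equiv k w1 i1 w2 i2 -> fo2_equiv k w2 i2 w1 i1.
Proof. by move=> eqv phi dp fp; have := eqv phi dp fp; tauto. Qed.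

Lemma fo2_equiv_letter k w1 w2 i1 i2 :
  i1 < size w1 -> fo2_equiv k w1 i1 w2 i2 -> letter w1 i1 = letter w2 i2.
Proof.
move=> /letter_some [a la] eqv; rewrite la.
by symmetry; apply: (eqv (FLab a VX) (leq0n k) erefl).1.
Qed.

Lemma not_fo2_equiv k w1 w2 j m :
  ~ fo2_equiv k w1 j w2 m ->
  exists phi : form A, [/\ qdepth phi <= k, free VY phi = false,
    sat w1 (fun=> j) phi & ~ sat w2 (fun=> m) phi].
Proof.
move=> neqv; apply: NNPP => none; apply: neqv => phi dp fp.
have [s1 | ns1] := classic (sat w1 (fun=> j) phi).
- by split=> // _; apply: NNPP => ns2; apply: none; exists phi; split.
- by split=> // s2; apply: NNPP => _; apply: none; exists (FNot phi); split.
Qed.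

Lemma separating_formula k w1 w2 j (P : nat -> Prop) (s : seq nat) :
  (forall m, m \in s -> P m -> ~ fo2_equiv k w1 j w2 m) ->
  exists phi : form A, [/\ qdepth phi <= k, free VY phi = false,
    sat w1 (fun=> j) phi & forall m, m \in s -> P m -> ~ sat w2 (fun=> m) phi].
Proof.
elim: s => [_|m s IH sep]; first by exists FTrue.
have [phi [dp fp s1 ns2]] := IH (fun m' ms => sep m' (mem_behead (s := m :: s) ms)).
have [Pm | nPm] := classic (P m); last first.
  by exists phi; split=> // m'; rewrite inE => /predU1P[-> /nPm|]; last exact: ns2.
have [psi [dq fq t1 nt2]] := not_fo2_equiv (sep m (mem_head m s) Pm).
exists (FAnd psi phi); split=> /=; rewrite ?geq_max ?dp ?dq ?fp ?fq //.
by move=> m'; rewrite inE => /predU1P[-> _ [] | ms Pm' []] //; move: (ns2 m' ms Pm').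
Qed.

Lemma literal_conjunction (I : eqType) (atom : I -> form A) w1 w2 e1 (s : seq I) :
  (forall i, qdepth (atom i) = 0) ->
  exists D : form A, [/\ qdepth D = 0, sat w1 e1 D &
    forall e2, sat w2 e2 D -> forall i, i \in s -> (sat w1 e1 (atom i) <-> sat w2 e2 (atom i))].
Proof.
move=> qf; elim: s => [|i s [D [dD sD hD]]]; first by exists FTrue.
have [s1 | ns1] := classic (sat w1 e1 (atom i)).
- exists (FAnd (atom i) D); split=> /=; rewrite ?qf ?dD //.
  by move=> e2 [s2 /hD hs] i'; rewrite inE => /predU1P[-> | /hs] //; tauto.
- exists (FAnd (FNot (atom i)) D); split=> /=; rewrite ?qf ?dD //.
  by move=> e2 [s2 /hD hs] i'; rewrite inE => /predU1P[-> | /hs] //; tauto.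
Qed.

Lemma move_type_formula w1 w2 x1 y1 :
  y1 < size w1 ->
  exists D : form A, [/\ qdepth D = 0, sat w1 (upd (fun=> x1) VY y1) D &
    forall x2 y2, sat w2 (upd (fun=> x2) VY y2) D ->
      letter w1 y1 = letter w2 y2 /\ same_type w1 w2 x1 y1 x2 y2].
Proof.
move=> /letter_some [b lb].
pose atom (i : option (bool + A)) : form A :=
  match i with
  | None => FLab b VY
  | Some (inl true) => FLt A VX VY
  | Some (inl false) => FLt A VY VX
  | Some (inr a) => FBtw a VX VY
  end.
have qf i : qdepth (atom i) = 0 by case: i => [[[]|a]|].
have [D [dD sD hD]] :=
  literal_conjunction w1 w2 (upd (fun=> x1) VY y1) (enum {: option (bool + A)}) qf.
exists D; split=> // x2 y2 /hD same_atom.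
have {}same_atom i := same_atom i (mem_enum _ i).
have [lab _] := same_atom None.
have := same_atom (Some (inl true)); have := same_atom (Some (inl false)).
rewrite /= /upd /= => lt_yx lt_xy.
split; first by rewrite lb (lab lb).
split; [by apply/idP/idP => /lt_xy | by apply/idP/idP => /lt_yx | move=> a].
exact: same_atom (Some (inr a)).
Qed.

Lemma fo2_equiv_forth k w1 w2 i1 i2 j1 :
  (forall j1 j2, j1 < size w1 -> fo2_equiv k w1 j1 w2 j2 -> p2wins k w1 j1 w2 j2) ->
  fo2_equiv k.+1 w1 i1 w2 i2 -> j1 < size w1 -> j1 <> i1 ->
  exists j2, legal w1 i1 j1 w2 i2 j2 /\ p2wins k w1 j1 w2 j2.
Proof.
move=> complete_k eqv lt_j1 ne_j1; apply: NNPP => no_answer.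
have [phi [dp fp s1 sep]] :=
  separating_formula (P := legal w1 i1 j1 w2 i2) (s := iota 0 (size w2))
    (fun j2 _ hl eqv2 => no_answer (ex_intro _ j2 (conj hl (complete_k _ _ lt_j1 eqv2)))).
have [D [dD sD hD]] := move_type_formula w2 i1 lt_j1.
have : sat w2 (fun=> i2) (FEx VY (FAnd D (swap_form phi))).
  apply/(eqv (FEx VY (FAnd D (swap_form phi)))) => //.
  - by rewrite /= qdepth_swap_form dD max0n.
  - by exists j1; split=> //; split=> //; apply/sat_swap_form_upd.
case=> j2 [lt_j2 [/hD [eq_l st] /(sat_swap_form_upd _ _ _ fp) s2]].
apply: (sep j2 _ _ s2); first by rewrite mem_iota add0n lt_j2.
exact: same_type_legal.
Qed.

Lemma fo2_equiv_p2wins k w1 w2 i1 i2 :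
  i1 < size w1 -> fo2_equiv k w1 i1 w2 i2 -> p2wins k w1 i1 w2 i2.
Proof.
elim: k w1 w2 i1 i2 => [|k IH] w1 w2 i1 i2 lt_i1 eqv;
  split; try exact: fo2_equiv_letter lt_i1 eqv; first by [].
split=> [j1 lt_j1 ne | j2 lt_j2 ne].
- exact: fo2_equiv_forth (IH w1 w2) eqv lt_j1 ne.
- have [j1 [hl win]] := fo2_equiv_forth (IH w2 w1) (fo2_equiv_sym eqv) lt_j2 ne.
  by exists j1; split=> //; apply: p2wins_sym.
Qed.

End Completeness.

Theorem theorem9 (A : finType) (k : nat) (w1 w2 : seq A) (i1 i2 : nat) :
  i1 < size w1 -> i2 < size w2 ->
  (fo2_equiv k w1 i1 w2 i2 <-> p2wins k w1 i1 w2 i2).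
Proof.
move=> lt_i1 _; split; [exact: fo2_equiv_p2wins | exact: p2wins_fo2_equiv].
Qed.
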